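(* Let $A\in\mathbb{R}^{m\times n}$ have rank $r$. (1) Consider the linear program in the variables $H^+,H^-\in\mathbb{R}^{n\times m}$: minimize $\sum_{i,j}(H^+_{ij}+H^-_{ij})$ subject to $AHA=A$, $(AH)^\top=AH$, $H^+\ge 0$, $H^-\ge0$, where $H:=H^+-H^-$. For every extreme point $(H^+,H^-)$ of its feasible region, $H=H^+-H^-$ has at most $mr$ nonzero entries. Moreover this bound is sharp for all $m\ge n\ge r\ge 1$: for such $m,n,r$ there is an $m\times n$ matrix $A$ of rank $r$ for which some extreme solution $H$ has exactly $mr$ nonzero entries. (2) Consider the linear program in the variables $H^+,H^-\in\mathbb{R}^{n\times m}$: minimize $\sum_{i,j}(H^+_{ij}+H^-_{ij})$ subject to $AHA=A$, $(AH)^\top=AH$, $HAA^+=H$, $H^+\ge 0$, $H^-\ge0$, where $H:=H^+-H^-$ and $A^+$ is the Moore–Penrose pseudoinverse of $A$ (this is the linear program for minimizing $\|H\|_1$ subject to $AHA=A$, $HAH=H$, $(AH)^\top=AH$, since under the first and third conditions $HAH=H$ is equivalent to $HAA^+=H$). For every extreme point $(H^+,H^-)$ of its feasible region, $H=H^+-H^-$ has at most $mr+(m-r)(n-r)$ nonzero entries.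
   Context: $\|H\|_1=\sum_{i,j}|H_{ij}|$; inequalities $H^{\pm}\ge0$ are entrywise. $A^+$ denotes the Moore–Penrose pseudoinverse of $A$. *)

From HB Require Import structures.
From mathcomp Require Import all_boot all_order all_algebra.
From mathcomp Require Import reals.
Set Implicit Arguments. Unset Strict Implicit. Unset Printing Implicit Defensive.
Import Order.TTheory GRing.Theory Num.Theory.
Local Open Scope ring_scope.

Definition is_MP_pinv (R : realType) (m n : nat)
  (A : 'M[R]_(m, n)) (Ap : 'M[R]_(n, m)) : Prop :=
  [/\ A *m Ap *m A = A, Ap *m A *m Ap = Ap,
      (A *m Ap)^T = A *m Ap & (Ap *m A)^T = Ap *m A].

Definition mx_nonneg (R : realType) (p q : nat) (M : 'M[R]_(p, q)) : Prop :=
  forall i j, 0 <= M i j.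

Definition lp1_feasible (R : realType) (m n : nat) (A : 'M[R]_(m, n))
  (Hp Hm : 'M[R]_(n, m)) : Prop :=
  [/\ A *m (Hp - Hm) *m A = A,
      (A *m (Hp - Hm))^T = A *m (Hp - Hm),
      mx_nonneg Hp & mx_nonneg Hm].

(* Feasible region of LP (2); Ap plays the role of A^+. *)
Definition lp2_feasible (R : realType) (m n : nat) (A : 'M[R]_(m, n))
  (Ap : 'M[R]_(n, m)) (Hp Hm : 'M[R]_(n, m)) : Prop :=
  [/\ A *m (Hp - Hm) *m A = A,
      (A *m (Hp - Hm))^T = A *m (Hp - Hm),
      (Hp - Hm) *m A *m Ap = Hp - Hm,
      mx_nonneg Hp & mx_nonneg Hm].

Definition extreme_point (R : realType) (n m : nat)
  (F : 'M[R]_(n, m) -> 'M[R]_(n, m) -> Prop) (Hp Hm : 'M[R]_(n, m)) : Prop :=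
  F Hp Hm /\
  forall (P1 M1 P2 M2 : 'M[R]_(n, m)) (t : R),
    F P1 M1 -> F P2 M2 -> 0 < t < 1 ->
    Hp = t *: P1 + (1 - t) *: P2 -> Hm = t *: M1 + (1 - t) *: M2 ->
    P1 = Hp /\ M1 = Hm.

Definition nnz (R : realType) (p q : nat) (M : 'M[R]_(p, q)) : nat :=
  #|[set ij : 'I_p * 'I_q | M ij.1 ij.2 != 0]|.

(* An extreme point (H+, H-) admits no nonzero feasible direction Z supported
   inside the support of H = H+ - H-: splitting Z entrywise between H+ and H-,
   (H+, H-) would be the midpoint of the two feasible points reached along
   +eps Z and -eps Z.  For LP (1) the feasible directions are the Z = U Y with
   U a basis of ker A, a space of dimension (n - r) m; for LP (2) they are the
   Z = U Y W with W a basis of the row space of A A^+, of dimension (n - r) r.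
   A space of dimension d of n x m matrices meeting the matrices supported on a
   set S of entries only in 0 has d + |S| <= n m, which gives both bounds.
   For sharpness take A = B [I_r 0] with B = E + J (E the m x r partial
   identity, J all ones): a feasible H vanishing below row r must be [B^+; 0],
   and B^+ has no zero entry. *)

From HB Require Import structures.
From mathcomp Require Import all_boot all_order all_algebra.
From mathcomp Require Import reals.
From mathcomp Require Import zify ring lra.
Set Implicit Arguments. Unset Strict Implicit. Unset Printing Implicit Defensive.
Import Order.TTheory GRing.Theory Num.Theory.
Local Open Scope ring_scope.

Section SupportCount.
Variable R : fieldType.

Lemma inj_cols_leq_card p N (V : 'M[R]_(p, N)) (T : {set 'I_N}) :
  (forall x : 'rV_p, (forall l, l \in T -> (x *m V) 0 l = 0) -> x = 0) ->
  (p <= #|T|)%N.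
Proof.
move=> Tinj; set C := colsub (fun k : 'I_#|T| => enum_val k) V.
have : row_free C.
  apply: inj_row_free => x xC0; apply: Tinj => l lT.
  rewrite -(enum_rankK_in lT lT); move: (enum_rank_in lT l) => k.
  transitivity ((x *m C) 0 k); last by rewrite xC0 mxE.
  by rewrite mulmx_colsub [RHS]mxE.
by rewrite /row_free => /eqP <-; apply: rank_leq_col.
Qed.

Lemma card_support_le a b n m (U : 'M[R]_(n, a)) (W : 'M[R]_(b, m))
    (S : {set 'I_n * 'I_m}) :
  (forall Y, (forall i j, (i, j) \notin S -> (U *m Y *m W) i j = 0) -> Y = 0) ->
  (a * b + #|S| <= n * m)%N.
Proof.
move=> Yinj.
pose f := @mxvec R n m \o mulmxr W \o mulmx U \o @vec_mx R a b.
pose T := [set mxvec_index ij.1 ij.2 | ij in ~: S].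
have cardT : #|T| = (n * m - #|S|)%N.
  rewrite card_imset; last by move=> [i j] [i' j'] /= /cast_ord_inj/enum_rank_inj.
  by have := cardsC S; rewrite card_prod !card_ord => <-; rewrite addKn.
have : (a * b <= #|T|)%N.
  apply: (@inj_cols_leq_card _ _ (lin1_mx f) T) => x xT0.
  apply/eqP; rewrite -vec_mx_eq0; apply/eqP/Yinj => i j ijS.
  rewrite -mxvecE -[mxvec _](mul_rV_lin1 f); apply: xT0.
  by apply/imsetP; exists (i, j); rewrite ?inE.
have := max_card S; rewrite card_prod !card_ord cardT; lia.
Qed.

Definition rker_basis m n (A : 'M[R]_(m, n)) := (row_base (kermx A^T))^T.

Lemma mulmx_rker_basis m n (A : 'M[R]_(m, n)) : A *m rker_basis A = 0.
Proof.
apply: trmx_inj; rewrite trmx_mul trmxK trmx0; apply/sub_kermxP.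
by rewrite eq_row_base.
Qed.

Lemma rker_basis_inj m n p (A : 'M[R]_(m, n)) (Y : 'M_(_, p)) :
  rker_basis A *m Y = 0 -> Y = 0.
Proof.
move=> /(congr1 trmx); rewrite trmx_mul trmxK trmx0 => /eqP.
by rewrite mulmx_free_eq0 ?row_base_free // -trmx0 => /eqP/trmx_inj.
Qed.

Lemma row_base_mul_idem n (P : 'M[R]_n) :
  P *m P = P -> row_base P *m P = row_base P.
Proof.
move=> PP; have /submxP[X ->] : (row_base P <= P)%MS by rewrite eq_row_base.
by rewrite -mulmxA PP.
Qed.

End SupportCount.

Definition inverse13 (R : comRingType) m n (A : 'M[R]_(m, n)) (H : 'M[R]_(n, m)) :=
  A *m H *m A = A /\ (A *m H)^T = A *m H.

Lemma inverse13_addr (R : comRingType) m n (A : 'M[R]_(m, n)) H Z :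
  inverse13 A H -> A *m Z = 0 -> inverse13 A (H + Z).
Proof. by move=> [AHA AH_sym] AZ; rewrite /inverse13 mulmxDr AZ addr0. Qed.

Lemma inverse13_left_unique (R : comRingType) m r (B : 'M[R]_(m, r)) X Y :
  X *m B = 1%:M -> (B *m X)^T = B *m X -> inverse13 B Y -> Y = X.
Proof.
move=> XB BX_sym [BYB BY_sym].
have YB : Y *m B = 1%:M by have := congr1 (mulmx X) BYB; rewrite !mulmxA XB !mul1mx.
have Bt : B^T = B^T *m (B *m Y) by rewrite -{1}BYB trmx_mul BY_sym.
have -> : X = X *m (B *m X)^T *m (B *m Y).
  by rewrite trmx_mul -mulmxA -(mulmxA _ B^T) -Bt -trmx_mul BX_sym mulmxA XB mul1mx.
by rewrite BX_sym !mulmxA XB mul1mx XB mul1mx.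
Qed.

Section PidProducts.
Variables (R : pzRingType) (p s q r : nat).

Lemma mul_pid_mx_ge (M : 'M[R]_(s, q)) (i : 'I_p) j :
  (r <= i)%N -> ((pid_mx r : 'M_(p, s)) *m M) i j = 0.
Proof.
by move=> le_ri; rewrite mxE big1 // => k _; rewrite mxE ltnNge le_ri andbF mul0r.
Qed.

Lemma mul_pid_mx_lt (M : 'M[R]_(s, q)) (i : 'I_p) (k : 'I_s) j :
  (i : nat) = k -> (k < r)%N -> ((pid_mx r : 'M_(p, s)) *m M) i j = M k j.
Proof.
move=> ik lt_kr; rewrite mxE (bigD1 k) //= mxE ik eqxx lt_kr mul1r big1 ?addr0 // => l lk.
by rewrite mxE ik eq_sym val_eqE (negbTE lk) mul0r.
Qed.

Lemma pid_mx_mul_constE (a : R) (i : 'I_p) (j : 'I_q) :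
  (r <= s)%N -> ((pid_mx r : 'M_(p, s)) *m (const_mx a : 'M_(s, q))) i j = (i < r)%:R * a.
Proof.
move=> le_rs; have [lt_ir | le_ri] := ltnP i r; last by rewrite mul_pid_mx_ge ?mul0r.
by rewrite (mul_pid_mx_lt _ (k := Ordinal (leq_trans lt_ir le_rs))) // !mxE mul1r.
Qed.

End PidProducts.

Lemma mul_const_mx (R : pzRingType) p s q (a b : R) :
  (const_mx a : 'M_(p, s)) *m (const_mx b : 'M_(s, q)) = const_mx (a * b *+ s).
Proof.
apply/matrixP => i j; rewrite !mxE (eq_bigr (fun=> a * b)) => [|k _].
  by rewrite sumr_const card_ord.
by rewrite !mxE.
Qed.

Lemma const_mx_mul_pidE (R : comPzRingType) p s q r (a : R) (i : 'I_p) (j : 'I_q) :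
  (r <= s)%N -> ((const_mx a : 'M_(p, s)) *m (pid_mx r : 'M_(s, q))) i j = (j < r)%:R * a.
Proof.
move=> le_rs; transitivity (((const_mx a : 'M_(p, s)) *m pid_mx r)^T j i).
  by rewrite [RHS]mxE.
by rewrite trmx_mul tr_pid_mx trmx_const pid_mx_mul_constE.
Qed.

Lemma inverse13_mul_pid_unique (R : comRingType) m n r (B : 'M[R]_(m, r)) X
    (H : 'M[R]_(n, m)) :
  (r <= n)%N -> X *m B = 1%:M -> (B *m X)^T = B *m X ->
  (forall (i : 'I_n) j, (r <= i)%N -> H i j = 0) ->
  inverse13 (B *m pid_mx r) H -> H = pid_mx r *m X.
Proof.
move=> le_rn XB BX_sym H_rows [AHA AH_sym].
have PPt : (pid_mx r : 'M[R]_(r, n)) *m pid_mx r = 1%:M by rewrite pid_mx_id ?pid_mx_1.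
have PtPH : (pid_mx r : 'M[R]_(n, r)) *m (pid_mx r *m H) = H.
  apply/matrixP => i j; rewrite mulmxA mul_pid_mx ?minnn ?(minn_idPr le_rn).
  have [lt_ir | le_ri] := ltnP i r; last by rewrite mul_pid_mx_ge ?H_rows.
  exact: mul_pid_mx_lt.
rewrite -PtPH (@inverse13_left_unique _ _ _ B X (pid_mx r *m H)) //; split.
  by have := congr1 (mulmx^~ (pid_mx r : 'M_(n, r))) AHA; rewrite -!mulmxA PPt !mulmx1.
by rewrite mulmxA.
Qed.

Lemma nnz_pid_mx_mul (R : realType) n m r (X : 'M[R]_(r, m)) :
  (r <= n)%N -> (forall i j, X i j != 0) -> nnz ((pid_mx r : 'M_(n, r)) *m X) = (r * m)%N.
Proof.
move=> le_rn X_neq0; rewrite /nnz.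
have -> : [set ij : 'I_n * 'I_m | (pid_mx r *m X) ij.1 ij.2 != 0] =
          setX [set i : 'I_n | (i < r)%N] setT.
  apply/setP => -[i j]; rewrite !inE /= andbT.
  have [lt_ir | le_ri] := ltnP i r; last by rewrite mul_pid_mx_ge ?eqxx.
  by rewrite (mul_pid_mx_lt _ (k := Ordinal lt_ir)) // X_neq0.
have -> : [set i : 'I_n | (i < r)%N] = widen_ord le_rn @: setT.
  apply/setP => i; rewrite inE; apply/idP/imsetP => [lt_ir | [k _ ->]]; last exact: (ltn_ord k).
  by exists (Ordinal lt_ir); last exact: val_inj.
by rewrite cardsX card_imset ?cardsT ?card_ord // => k l /(congr1 val) /= /val_inj.
Qed.

Lemma exists_scale_below (R : realFieldType) (I : finType) (z w : I -> R) :
  (forall k, 0 <= w k) -> (forall k, w k = 0 -> z k = 0) ->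
  exists2 e : R, 0 < e & forall k, e * `|z k| <= w k.
Proof.
move=> w_ge0 wz; pose T := \sum_k `|z k| / w k.
have T_ge0 : 0 <= T by apply: sumr_ge0 => k _; rewrite divr_ge0.
have T1_gt0 : 0 < 1 + T by lra.
exists (1 + T)^-1; first by rewrite invr_gt0.
move=> k; rewrite mulrC ler_pdivrMr //.
have [/wz -> | w_neq0] := eqVneq (w k) 0; first by rewrite normr0 mulr_ge0 ?w_ge0 ?ltW.
have w_gt0 : 0 < w k by rewrite lt_def w_neq0 w_ge0.
have zk_le : `|z k| / w k <= T.
  by rewrite /T (bigD1 k) //= lerDl sumr_ge0 // => l _; rewrite divr_ge0.
by rewrite -ler_pdivrMl // mulrC; lra.
Qed.

Lemma convex_comb_eq0 (R : numDomainType) (t a b : R) :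
  0 < t < 1 -> 0 <= a -> 0 <= b -> t * a + (1 - t) * b = 0 -> a = 0.
Proof.
move=> /andP[t_gt0 t_lt1] a_ge0 b_ge0 /eqP.
rewrite paddr_eq0 ?mulr_ge0 ?subr_ge0 ?(ltW t_gt0) ?(ltW t_lt1) //.
by rewrite mulf_eq0 (gt_eqF t_gt0) => /andP[/eqP].
Qed.

Definition mx_pos (R : realType) p q (M : 'M[R]_(p, q)) := map_mx (Num.max^~ 0) M.

Lemma mx_pos_ge0 (R : realType) p q (M : 'M[R]_(p, q)) : mx_nonneg (mx_pos M).
Proof. by move=> i j; rewrite mxE le_max lexx orbT. Qed.

Lemma mx_pos_subN (R : realType) p q (M : 'M[R]_(p, q)) : mx_pos M - mx_pos (- M) = M.
Proof.
apply/matrixP => i j; rewrite !mxE.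
have [M_ge0 | M_lt0] := leP 0 (M i j).
  by rewrite max_r ?subr0 // oppr_le0.
by rewrite max_l ?sub0r ?opprK // oppr_ge0 ltW.
Qed.

Section ExtremePoints.
Variables (R : realType) (n m : nat).
Variables (F : 'M[R]_(n, m) -> 'M[R]_(n, m) -> Prop) (G : 'M[R]_(n, m) -> Prop).
Hypothesis FE : forall P M, F P M <-> [/\ G (P - M), mx_nonneg P & mx_nonneg M].

Lemma extreme_point_direction_eq0 (Q : 'M[R]_(n, m) -> Prop) Hp Hm :
  (forall H Z, G H -> Q Z -> G (H + Z)) -> (forall c Z, Q Z -> Q (c *: Z)) ->
  extreme_point F Hp Hm ->
  forall Z, Q Z -> (forall i j, (Hp - Hm) i j = 0 -> Z i j = 0) -> Z = 0.
Proof.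
move=> GQ Qscale [/FE[GH Hp_ge0 Hm_ge0] Hext] Z QZ Zsupp.
(* Where Hp > 0 the direction Z moves Hp, elsewhere it moves Hm, which is then
   positive on the support of Z. *)
pose w (ij : 'I_n * 'I_m) := if 0 < Hp ij.1 ij.2 then Hp ij.1 ij.2 else Hm ij.1 ij.2.
have [e e_gt0 eZ_le] : exists2 e : R, 0 < e & forall ij, e * `|Z ij.1 ij.2| <= w ij.
  apply: exists_scale_below => [[i j] | [i j]]; rewrite /w /=.
    by case: ifP => [/ltW|_].
  case: ltgtP (Hp_ge0 i j) => // [Hp_gt0 _ Hp0 | Hp0 _ Hm0].
    by rewrite Hp0 ltxx in Hp_gt0.
  by apply: Zsupp; rewrite !mxE -Hp0 Hm0 subrr.
have norm_addr_ge0 (x y : R) : `|y| <= x -> 0 <= x + y.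
  by rewrite ler_norml => /andP[]; lra.
pose Zp := \matrix_(i, j) if 0 < Hp i j then e * Z i j else 0.
pose Zm := \matrix_(i, j) if 0 < Hp i j then 0 else - (e * Z i j).
have feas (s : R) : `|s| = 1 -> F (Hp + s *: Zp) (Hm + s *: Zm).
  move=> s1; apply/FE; split.
  - have -> : Hp + s *: Zp - (Hm + s *: Zm) = (Hp - Hm) + (s * e) *: Z.
      by apply/matrixP => i j; rewrite !mxE; case: ifP => _; ring.
    by apply: GQ; last exact: Qscale.
  - move=> i j; rewrite !mxE; case: ifP => [Hp_gt0 | _]; last by rewrite mulr0 addr0.
    apply: norm_addr_ge0; have := eZ_le (i, j); rewrite /w /= Hp_gt0.
    by rewrite normrM s1 mul1r normrM gtr0_norm.
  - move=> i j; rewrite !mxE; case: ifP => [_ | Hp_le0]; first by rewrite mulr0 addr0.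
    apply: norm_addr_ge0; have := eZ_le (i, j); rewrite /w /= Hp_le0.
    by rewrite normrM s1 mul1r normrN normrM gtr0_norm.
have [] := Hext _ _ _ _ 2^-1 (feas 1 (normr1 _)) (feas (-1) (normrN1 _)) _ _ _.
- by apply/andP; split; lra.
- by apply/matrixP => i j; rewrite !mxE; field.
- by apply/matrixP => i j; rewrite !mxE; field.
rewrite !scale1r => /(canRL (addKr Hp)) + /(canRL (addKr Hm)); rewrite !addNr => Zp0 Zm0.
have eZ0 i j : e * Z i j = 0.
  move/matrixP: Zp0 => /(_ i j); move/matrixP: Zm0 => /(_ i j); rewrite !mxE.
  by case: ifP => _ // /eqP; rewrite oppr_eq0 => /eqP.
apply/matrixP => i j; have /eqP := eZ0 i j.
by rewrite mulf_eq0 gt_eqF //= mxE => /eqP.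
Qed.

Lemma extreme_point_of_support_unique (H : 'M[R]_(n, m)) :
  G H -> (forall H', G H' -> (forall i j, H i j = 0 -> H' i j = 0) -> H' = H) ->
  extreme_point F (mx_pos H) (mx_pos (- H)).
Proof.
move=> GH Huniq; split; first by apply/FE; rewrite mx_pos_subN; split=> //; apply: mx_pos_ge0.
move=> P1 M1 P2 M2 t /FE[G1 P1_ge0 M1_ge0] /FE[_ P2_ge0 M2_ge0] t01.
move=> /matrixP HpE /matrixP HmE.
have P1_0 i j : mx_pos H i j = 0 -> P1 i j = 0.
  by move=> Hp0; apply: (convex_comb_eq0 t01 (P1_ge0 i j) (P2_ge0 i j)); rewrite -Hp0 HpE !mxE.
have M1_0 i j : mx_pos (- H) i j = 0 -> M1 i j = 0.
  by move=> Hm0; apply: (convex_comb_eq0 t01 (M1_ge0 i j) (M2_ge0 i j)); rewrite -Hm0 HmE !mxE.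
have /matrixP H1 : P1 - M1 = H.
  apply: Huniq => // i j H0.
  by rewrite !mxE P1_0 ?M1_0 ?subr0 // !mxE H0 ?oppr0 maxxx.
split; apply/matrixP => i j; move: (H1 i j) (P1_0 i j) (M1_0 i j); rewrite !mxE.
all: have [H_ge0 | H_lt0] := leP 0 (H i j).
- by rewrite max_r ?oppr_le0 // => <- _ /(_ erefl) ->; rewrite subr0.
- by move=> _ /(_ erefl).
- by rewrite max_r ?oppr_le0 // => _ _ /(_ erefl).
- by rewrite max_l ?oppr_ge0 ?ltW // => <- /(_ erefl) -> _; rewrite sub0r opprK.
Qed.

End ExtremePoints.

Lemma lp1_feasibleE (R : realType) m n (A : 'M[R]_(m, n)) P M :
  lp1_feasible A P M <-> [/\ inverse13 A (P - M), mx_nonneg P & mx_nonneg M].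
Proof. by split=> [[]|[[]]]. Qed.

Lemma lp2_feasibleE (R : realType) m n (A : 'M[R]_(m, n)) Ap P M :
  lp2_feasible A Ap P M <->
  [/\ inverse13 A (P - M) /\ (P - M) *m A *m Ap = P - M, mx_nonneg P & mx_nonneg M].
Proof. by split=> [[]|[[[]]]]. Qed.

Lemma extreme_point_nnz_bound (R : realType) n m a b
    (F : 'M[R]_(n, m) -> 'M[R]_(n, m) -> Prop) (G Q : 'M[R]_(n, m) -> Prop)
    (U : 'M[R]_(n, a)) (W : 'M[R]_(b, m)) Hp Hm :
  (forall P M, F P M <-> [/\ G (P - M), mx_nonneg P & mx_nonneg M]) ->
  (forall H Z, G H -> Q Z -> G (H + Z)) -> (forall c Z, Q Z -> Q (c *: Z)) ->
  (forall Y, Q (U *m Y *m W)) -> (forall Y, U *m Y *m W = 0 -> Y = 0) ->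
  extreme_point F Hp Hm -> (a * b + nnz (Hp - Hm) <= n * m)%N.
Proof.
move=> FE GQ Qscale QUW UW_inj Hext; apply: card_support_le => Y Y_supp.
apply/UW_inj/(extreme_point_direction_eq0 FE GQ Qscale Hext) => // i j H0.
by apply: Y_supp; rewrite inE /= H0 eqxx.
Qed.

Lemma lp1_extreme_nnz_le (R : realType) m n (A : 'M[R]_(m, n)) Hp Hm :
  extreme_point (lp1_feasible A) Hp Hm -> (nnz (Hp - Hm) <= m * \rank A)%N.
Proof.
move=> Hext.
have : (\rank (kermx A^T) * m + nnz (Hp - Hm) <= n * m)%N.
  apply: (extreme_point_nnz_bound (lp1_feasibleE A) (@inverse13_addr _ _ _ A)
    (U := rker_basis A) (W := 1%:M) _ _ _ Hext).
  - by move=> c Z AZ; rewrite -scalemxAr AZ scaler0.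
  - by move=> Y; rewrite !mulmxA mulmx_rker_basis !mul0mx.
  - by move=> Y; rewrite mulmx1; apply: rker_basis_inj.
rewrite mxrank_ker mxrank_tr; have := rank_leq_col A; nia.
Qed.

Lemma lp2_extreme_nnz_le (R : realType) m n (A : 'M[R]_(m, n)) Ap Hp Hm :
  A *m Ap *m A = A -> extreme_point (lp2_feasible A Ap) Hp Hm ->
  (nnz (Hp - Hm) <= m * \rank A + (m - \rank A) * (n - \rank A))%N.
Proof.
move=> AApA Hext; set P := A *m Ap.
have PP : P *m P = P by rewrite /P mulmxA AApA.
have rankP : \rank P = \rank A.
  by apply/eqP; rewrite eqn_leq mxrankM_maxl -{1}AApA -/P mxrankM_maxl.
have : (\rank (kermx A^T) * \rank P + nnz (Hp - Hm) <= n * m)%N.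
  apply: (extreme_point_nnz_bound (lp2_feasibleE A Ap) _ _
    (G := fun H => inverse13 A H /\ H *m A *m Ap = H)
    (Q := fun Z => A *m Z = 0 /\ Z *m A *m Ap = Z)
    (U := rker_basis A) (W := row_base P) _ _ Hext).
  - move=> H Z [GH HAAp] [AZ ZAAp]; split; first exact: inverse13_addr.
    by rewrite !mulmxDl HAAp ZAAp.
  - by move=> c Z [AZ ZAAp]; rewrite -scalemxAr AZ scaler0 -!scalemxAl ZAAp.
  - move=> Y; split; first by rewrite !mulmxA mulmx_rker_basis !mul0mx.
    by rewrite -mulmxA -/P -mulmxA row_base_mul_idem.
  - move=> Y; rewrite -mulmxA => /rker_basis_inj/eqP.
    by rewrite mulmx_free_eq0 ?row_base_free // => /eqP.
rewrite mxrank_ker mxrank_tr rankP; have := rank_leq_col A; have := rank_leq_row A; nia.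
Qed.

Section SharpExample.
Variables (R : realFieldType) (m r : nat).
Hypothesis le_rm : (r <= m)%N.

Local Notation c := ((m + 2)%:R : R).
Local Notation g := (c / (1 + c * r%:R)).

Definition sharp_base : 'M[R]_(m, r) := pid_mx r + const_mx 1.

(* sharp_base^T *m sharp_base = 1 + c J with J the all-ones matrix, J^2 = r J,
   whose inverse is 1 - g J: so sharp_linv is the Moore-Penrose inverse of
   sharp_base. *)
Definition sharp_linv : 'M[R]_(r, m) := (1%:M - g *: const_mx 1) *m sharp_base^T.

Lemma sharp_base_gram : sharp_base^T *m sharp_base = 1%:M + c *: const_mx 1.
Proof.
have PJ : (pid_mx r : 'M_(r, m)) *m const_mx 1 = const_mx 1 :> 'M[R]_r.
  by apply/matrixP => i j; rewrite pid_mx_mul_constE // ltn_ord mxE mul1r.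
have JP : (const_mx 1 : 'M_(r, m)) *m pid_mx r = const_mx 1 :> 'M[R]_r.
  by apply/matrixP => i j; rewrite const_mx_mul_pidE // ltn_ord mxE mul1r.
rewrite /sharp_base [_^T]linearD /= tr_pid_mx trmx_const mulmxDl !mulmxDr.
rewrite pid_mx_id // pid_mx_1 PJ JP mul_const_mx.
by apply/matrixP => i j; rewrite !mxE natrD; ring.
Qed.

Lemma sharp_linvK : sharp_linv *m sharp_base = 1%:M.
Proof.
have d_gt0 : 0 < 1 + c * r%:R by rewrite ltr_pwDl ?mulr_ge0 ?ler0n.
rewrite /sharp_linv -mulmxA sharp_base_gram mulmxBl !mul1mx mulmxDr mulmx1.
rewrite -scalemxAl -scalemxAr mul_const_mx.
by apply/matrixP => i j; rewrite !mxE !mulr1; field; rewrite -natrD gt_eqF.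
Qed.

Lemma sharp_base_linv_sym : (sharp_base *m sharp_linv)^T = sharp_base *m sharp_linv.
Proof.
rewrite /sharp_linv !trmx_mul trmxK mulmxA [(_ - _)^T]linearB /=.
by rewrite trmx1 scalemx_const trmx_const.
Qed.

Lemma sharp_linvE i j :
  sharp_linv i j = (i == j :> nat)%:R + 1 - g * ((j < r)%:R + r%:R).
Proof.
rewrite /sharp_linv /sharp_base [_^T]linearD /= tr_pid_mx trmx_const.
rewrite mulmxBl mul1mx -scalemxAl mulmxDr mul_const_mx.
have -> : (const_mx 1 : 'M[R]_r) *m pid_mx r = \matrix_(k < r, l < m) (l < r)%:R.
  by apply/matrixP => k l; rewrite const_mx_mul_pidE // !mxE mulr1.
by rewrite !mxE ltn_ord andbT mulr1.
Qed.

Lemma sharp_linv_neq0 i j : sharp_linv i j != 0.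
Proof.
have r_ge1 : 1 <= r%:R :> R by rewrite ler1n (leq_ltn_trans _ (ltn_ord i)).
have c_ge2 : 2 <= c by rewrite ler_nat leq_addl.
have d_gt0 : 0 < 1 + c * r%:R by rewrite ltr_pwDl ?mulr_ge0 ?ler0n.
rewrite sharp_linvE; set a := (i == j :> nat)%:R; set b := (j < r)%:R.
have -> : a + 1 - g * (b + r%:R) = ((a + 1) * (1 + c * r%:R) - c * (b + r%:R)) / (1 + c * r%:R).
  by field; rewrite -natrD gt_eqF.
rewrite mulf_eq0 invr_eq0 (gt_eqF d_gt0) orbF {}/a {}/b; apply/eqP.
have [<- | _] := eqVneq (i : nat) j; last case: ltnP.
all: by rewrite ?ltn_ord /= ?mulr0n ?mulr1n; nra.
Qed.

End SharpExample.

Lemma lp1_extreme_nnz_sharp (R : realType) m n r : (r <= n)%N -> (r <= m)%N ->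
  exists A : 'M[R]_(m, n), \rank A = r /\
    exists Hp Hm : 'M[R]_(n, m),
      extreme_point (lp1_feasible A) Hp Hm /\ nnz (Hp - Hm) = (m * r)%N.
Proof.
move=> le_rn le_rm; set B := sharp_base R m r; set X := sharp_linv R m r.
have XB : X *m B = 1%:M := sharp_linvK R le_rm.
have PPt : (pid_mx r : 'M[R]_(r, n)) *m pid_mx r = 1%:M by rewrite pid_mx_id ?pid_mx_1.
exists (B *m pid_mx r); split.
  rewrite mxrankMfree; last by rewrite /row_free rank_pid_mx.
  by apply/eqP; rewrite eqn_leq rank_leq_col; have := mxrankM_maxr X B; rewrite XB mxrank1.
set H := (pid_mx r : 'M_(n, r)) *m X.
exists (mx_pos H), (mx_pos (- H)); split; last first.
  rewrite mx_pos_subN mulnC; apply: nnz_pid_mx_mul => // i j.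
  exact: sharp_linv_neq0.
apply: (extreme_point_of_support_unique (lp1_feasibleE _)).
  have AH : B *m pid_mx r *m H = B *m X by rewrite /H mulmxA -(mulmxA B) PPt mulmx1.
  split; rewrite AH; last exact: sharp_base_linv_sym.
  by rewrite mulmxA -(mulmxA B) XB mulmx1.
move=> H' GH' H'_supp; apply: inverse13_mul_pid_unique GH' => //.
  exact: sharp_base_linv_sym.
by move=> i j le_ri; apply: H'_supp; apply: mul_pid_mx_ge.
Qed.

Theorem proposition3p1 (R : realType) :
  (* (1) bound *)
  (forall (m n : nat) (A : 'M[R]_(m, n)) (Hp Hm : 'M[R]_(n, m)),
     extreme_point (lp1_feasible A) Hp Hm ->
     (nnz (Hp - Hm) <= m * \rank A)%N) /\
  (* (1) sharpness *)
  (forall (m n r : nat), (1 <= r)%N -> (r <= n)%N -> (n <= m)%N ->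
     exists A : 'M[R]_(m, n), \rank A = r /\
       exists Hp Hm : 'M[R]_(n, m),
         extreme_point (lp1_feasible A) Hp Hm /\ nnz (Hp - Hm) = (m * r)%N) /\
  (* (2) bound *)
  (forall (m n : nat) (A : 'M[R]_(m, n)) (Ap : 'M[R]_(n, m)),
     is_MP_pinv A Ap ->
     forall Hp Hm : 'M[R]_(n, m),
       extreme_point (lp2_feasible A Ap) Hp Hm ->
       (nnz (Hp - Hm) <= m * \rank A + (m - \rank A) * (n - \rank A))%N).
Proof.
split; first exact: lp1_extreme_nnz_le.
split=> [m n r _ le_rn le_nm | m n A Ap [AApA _ _ _]].
  exact: lp1_extreme_nnz_sharp (leq_trans le_rn le_nm).
by move=> Hp Hm; apply: lp2_extreme_nnz_le.
Qed.
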